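(* Let $(N,g)$ be a simply connected five-dimensional two-step nilpotent Lie group with a left-invariant Riemannian metric, with Lie algebra $\mathfrak{n}$, Levi-Civita connection $\nabla$, and let $\mathfrak{h}$ denote the center of $\mathfrak{n}$. Then every left-invariant projective vector field $X\in\mathfrak{n}$ is affine, and a left-invariant vector field $X\in\mathfrak{n}$ is affine if and only if $X\in\mathfrak{h}$.
   Context: A Lie algebra $\mathfrak{n}$ is two-step nilpotent if $[\mathfrak{n},\mathfrak{n}]\neq 0$ and $[\mathfrak{n},[\mathfrak{n},\mathfrak{n}]]=0$. Left-invariant vector fields are identified with elements of $\mathfrak{n}=T_eN$, and $g$ with an inner product $\langle\cdot,\cdot\rangle$ on $\mathfrak{n}$. Up to isometry, such $(\mathfrak{n},\langle\cdot,\cdot\rangle)$ admits an orthonormal basis $e_1,\dots,e_5$ with one of the following bracket structures (all brackets not listed being zero): (Case 1, center of dimension 1) $[e_1,e_2]=\lambda e_5$, $[e_3,e_4]=\mu e_5$ with $\lambda\ge\mu>0$; (Case 2, center of dimension 2) $[e_1,e_2]=\lambda e_4$, $[e_1,e_3]=\mu e_5$ with $\lambda\ge\mu>0$; (Case 3, center of dimension 3) $[e_1,e_2]=\lambda e_3$ with $\lambda>0$. A vector field $X$ is projective if there is a 1-form $\alpha$ with $(\mathcal{L}_X\nabla)(U,V)=\alpha(U)V+\alpha(V)U$ for all vector fields $U,V$, where $(\mathcal{L}_X\nabla)(U,V)=[X,\nabla_UV]-\nabla_{[X,U]}V-\nabla_U[X,V]$; $X$ is affine if $\mathcal{L}_X\nabla=0$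 (equivalently, projective with $\alpha=0$). *)

From HB Require Import structures.
From mathcomp Require Import all_boot all_order all_algebra.
Set Implicit Arguments. Unset Strict Implicit. Unset Printing Implicit Defensive.
Import Order.TTheory GRing.Theory Num.Theory.
Local Open Scope ring_scope.

(* The 5-dimensional metric Lie algebra is modelled as 'rV[R]_5 with the
   standard inner product (i.e. the standard basis is orthonormal), and with
   a bracket given by structure constants c i j = [e_i, e_j]. *)

Definition ebas (R : rcfType) (k : 'I_5) : 'rV[R]_5 := delta_mx 0 k.

Definition ip (R : rcfType) (u v : 'rV[R]_5) : R := (u *m v^T) 0 0.

Definition lb (R : rcfType) (c : 'I_5 -> 'I_5 -> 'rV[R]_5) (u v : 'rV[R]_5)
  : 'rV[R]_5 := \sum_(i < 5) \sum_(j < 5) (u 0 i * v 0 j) *: c i j.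

Definition two_step_nilpotent (R : rcfType) (c : 'I_5 -> 'I_5 -> 'rV[R]_5) : Prop :=
  [/\ forall i j, c i j = - c j i,
      forall u v w, lb c u (lb c v w) + lb c v (lb c w u) + lb c w (lb c u v) = 0,
      exists u v, lb c u v != 0
    & forall u v w, lb c u (lb c v w) = 0].

(* metric adjoint of ad_u :  <adj c u v, w> = <v, [u, w]> *)
Definition adj (R : rcfType) (c : 'I_5 -> 'I_5 -> 'rV[R]_5) (u v : 'rV[R]_5)
  : 'rV[R]_5 := \sum_(k < 5) ip v (lb c u (ebas R k)) *: ebas R k.

(* Levi-Civita connection on left-invariant fields (Koszul formula) *)
Definition nabla (R : rcfType) (c : 'I_5 -> 'I_5 -> 'rV[R]_5) (u v : 'rV[R]_5)
  : 'rV[R]_5 := 2^-1 *: (lb c u v - adj c u v - adj c v u).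

Definition lieDer (R : rcfType) (c : 'I_5 -> 'I_5 -> 'rV[R]_5) (x u v : 'rV[R]_5)
  : 'rV[R]_5 := lb c x (nabla c u v) - nabla c (lb c x u) v - nabla c u (lb c x v).

(* projective: exists a 1-form alpha (here alpha = <a, .>, which covers all
   linear functionals) with (L_X nabla)(U,V) = alpha(U) V + alpha(V) U *)
Definition projective (R : rcfType) (c : 'I_5 -> 'I_5 -> 'rV[R]_5) (x : 'rV[R]_5) : Prop :=
  exists a : 'rV[R]_5, forall u v : 'rV[R]_5,
    lieDer c x u v = ip a u *: v + ip a v *: u.

Definition affine (R : rcfType) (c : 'I_5 -> 'I_5 -> 'rV[R]_5) (x : 'rV[R]_5) : Prop :=
  forall u v : 'rV[R]_5, lieDer c x u v = 0.

Definition in_center (R : rcfType) (c : 'I_5 -> 'I_5 -> 'rV[R]_5) (x : 'rV[R]_5) : Prop :=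
  forall y : 'rV[R]_5, lb c x y = 0.

From HB Require Import structures.
From mathcomp Require Import all_boot all_order all_algebra.
Import Order.TTheory GRing.Theory Num.Theory.
Set Implicit Arguments. Unset Strict Implicit.
Local Open Scope ring_scope.

(* Trace argument: for fixed V, the map U |-> (L_X nabla)(U, V) is the
   commutator of two matrices plus U |-> adj_U [X, V] / 2, whose diagonal
   vanishes; so it is traceless, whereas U |-> alpha(U) V + alpha(V) U has
   trace 6 alpha(V).  Hence projective fields are affine.  If X is affine,
   (L_X nabla)(X, [X, W]) = - [X, adj_X [X, W]] / 2 = 0, and two uses of
   positivity of the inner product give first adj_X [X, W] = 0 and then
   [X, W] = 0. *)

Section MetricBracket.

Variables (R : rcfType) (c : 'I_5 -> 'I_5 -> 'rV[R]_5).

Definition ad_mx (u : 'rV[R]_5) : 'M[R]_5 := \matrix_(j, l) \sum_i u 0 i * c i j 0 l.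

Definition adj_mx (v : 'rV[R]_5) : 'M[R]_5 := \matrix_(i, k) \sum_l v 0 l * c i k 0 l.

Lemma lb_mx u v : lb c u v = v *m ad_mx u.
Proof.
apply/rowP => l; rewrite /lb !mxE summxE.
under eq_bigr => i _ do rewrite summxE.
rewrite exchange_big /=; apply: eq_bigr => j _.
rewrite mxE mulr_sumr; apply: eq_bigr => i _.
by rewrite !mxE mulrA [u 0 i * _]mulrC.
Qed.

Lemma lbr0 u : lb c u 0 = 0.
Proof. by rewrite lb_mx mul0mx. Qed.

Lemma lbrZ u a v : lb c u (a *: v) = a *: lb c u v.
Proof. by rewrite !lb_mx scalemxAl. Qed.

Lemma ipE (u v : 'rV[R]_5) : ip u v = \sum_k u 0 k * v 0 k.
Proof. by rewrite /ip !mxE; apply: eq_bigr => k _; rewrite mxE. Qed.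

Lemma ipC (u v : 'rV[R]_5) : ip u v = ip v u.
Proof. by rewrite !ipE; apply: eq_bigr => k _; rewrite mulrC. Qed.

Lemma ipr0 (u : 'rV[R]_5) : ip u 0 = 0.
Proof. by rewrite /ip trmx0 mulmx0 mxE. Qed.

Lemma ip_ebas (u : 'rV[R]_5) k : ip u (ebas R k) = u 0 k.
Proof.
rewrite ipE (bigD1 k) //= big1 ?addr0; first by rewrite /ebas mxE !eqxx mulr1.
by move=> i /negbTE ik; rewrite /ebas mxE ik andbF mulr0.
Qed.

Lemma ebas_mulmx k (M : 'M[R]_5) : (ebas R k *m M) 0 k = M k k.
Proof. by rewrite /ebas -rowE mxE. Qed.

Lemma ip_eq0 (u : 'rV[R]_5) : ip u u = 0 -> u = 0.
Proof.
rewrite ipE => u2_0; apply/rowP => k; rewrite mxE.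
have : u 0 k * u 0 k = 0.
  by apply: (psumr_eq0P _ u2_0) => // i _; rewrite -expr2 sqr_ge0.
by move/eqP; rewrite mulf_eq0 orbb => /eqP.
Qed.

Lemma adj_trmx u v : adj c u v = v *m (ad_mx u)^T.
Proof.
rewrite [RHS]row_sum_delta /adj; apply: eq_bigr => k _; congr (_ *: _).
rewrite lb_mx /ebas -rowE ipE !mxE; apply: eq_bigr => l _.
by rewrite !mxE.
Qed.

Lemma adj_mxE u v : adj c u v = u *m adj_mx v.
Proof.
rewrite adj_trmx; apply/rowP => k; rewrite !mxE.
under eq_bigr => l _ do rewrite !mxE mulr_sumr.
rewrite exchange_big /=; apply: eq_bigr => i _.
rewrite !mxE mulr_sumr; apply: eq_bigr => l _.
by rewrite mulrCA.
Qed.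

Lemma ip_adjl u v w : ip (adj c u v) w = ip v (lb c u w).
Proof. by rewrite /ip adj_trmx lb_mx trmx_mul mulmxA. Qed.

Lemma adj_center z u : in_center c z -> adj c z u = 0.
Proof. by move=> zC; rewrite /adj big1 // => k _; rewrite zC ipr0 scale0r. Qed.

Lemma nablar0 u : nabla c u 0 = 0.
Proof. by rewrite /nabla lbr0 adj_trmx adj_mxE !mul0mx !subr0 scaler0. Qed.

Hypothesis c_anti : forall i j, c i j = - c j i.

Lemma lb_anti u v : lb c u v = - lb c v u.
Proof.
rewrite /lb exchange_big /= -sumrN; apply: eq_bigr => i _.
rewrite -sumrN; apply: eq_bigr => j _.
by rewrite (c_anti j i) scalerN mulrC.
Qed.

Lemma lbxx u : lb c u u = 0.
Proof.
have : (2 : R) *: lb c u u = 0 by rewrite scaler_nat mulr2n {1}lb_anti addNr.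
by move/eqP; rewrite scaler_eq0 pnatr_eq0 => /eqP.
Qed.

Lemma adj_ebas_diag k w : (adj c (ebas R k) w) 0 k = 0.
Proof. by rewrite -ip_ebas ip_adjl lbxx ipr0. Qed.

Definition nabla_mx (v : 'rV[R]_5) : 'M[R]_5 :=
  2^-1 *: (- ad_mx v - adj_mx v - (ad_mx v)^T).

Lemma nabla_mxE u v : nabla c u v = u *m nabla_mx v.
Proof.
rewrite /nabla /nabla_mx lb_anti lb_mx adj_mxE [adj c v u]adj_trmx.
by rewrite -scalemxAr !mulmxDr !mulmxN.
Qed.

Lemma nabla_center u z : in_center c z -> nabla c u z = - (2^-1 *: adj c u z).
Proof.
move=> zC; rewrite /nabla lb_anti zC (adj_center _ zC) oppr0 addr0 add0r.
by rewrite scalerN.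
Qed.

Lemma center_affine x : in_center c x -> affine c x.
Proof. by move=> xC u v; rewrite /lieDer !xC nablar0 nabla_mxE mul0mx !subr0. Qed.

Hypothesis lb_lb : forall u v w, lb c u (lb c v w) = 0.

Lemma center_lb u v : in_center c (lb c u v).
Proof. by move=> w; rewrite lb_anti lb_lb oppr0. Qed.

Lemma lieDer_center x u z : in_center c z ->
  lieDer c x u z = - (2^-1 *: lb c x (adj c u z)).
Proof.
move=> zC; rewrite /lieDer !(nabla_center _ zC).
rewrite (adj_center _ (center_lb _ _)) scaler0 oppr0 subr0.
by rewrite (lb_anti x z) zC oppr0 nablar0 subr0 -scaleNr lbrZ scaleNr.
Qed.

Lemma lieDer_mx x u v : lieDer c x u v =
  u *m (nabla_mx v *m ad_mx x - ad_mx x *m nabla_mx v) + 2^-1 *: adj c u (lb c x v).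
Proof.
rewrite /lieDer (nabla_center _ (center_lb _ _)) opprK !nabla_mxE !lb_mx.
by rewrite mulmxBr !mulmxA.
Qed.

Lemma lieDer_traceless x v : \sum_k (lieDer c x (ebas R k) v) 0 k = 0.
Proof.
under eq_bigr => k _ do rewrite lieDer_mx mxE [X in _ + X]mxE
  adj_ebas_diag mulr0 addr0 ebas_mulmx.
by rewrite -/(\tr _) linearB /= mxtrace_mulC subrr.
Qed.

Lemma affine_center x : affine c x -> in_center c x.
Proof.
move=> xA w; set z := lb c x w.
have zC : in_center c z by apply: center_lb.
have adj_lb0 : lb c x (adj c x z) = 0.
  have /eqP := xA x z; rewrite (lieDer_center _ _ zC) oppr_eq0.
  by rewrite scaler_eq0 invr_eq0 pnatr_eq0 => /eqP.
have adj0 : adj c x z = 0 by apply: ip_eq0; rewrite ip_adjl adj_lb0 ipr0.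
by apply: ip_eq0; rewrite /z -ip_adjl adj0 ipC ipr0.
Qed.

Lemma projective_affine x : projective c x -> affine c x.
Proof.
move=> [a xP].
have a0 v : ip a v = 0.
  have := lieDer_traceless x v.
  under eq_bigr => k _ do rewrite xP ip_ebas /ebas !mxE !eqxx mulr1.
  rewrite big_split /= -ipE sumr_const card_ord -mulr_natr.
  rewrite -{1}(mulr1 (ip a v)) -mulrDr => /eqP.
  by rewrite mulf_eq0 addrC natr1 pnatr_eq0 orbF => /eqP.
by move=> u v; rewrite xP !a0 !scale0r addr0.
Qed.

End MetricBracket.

Theorem mainTheorem2 (R : rcfType) (c : 'I_5 -> 'I_5 -> 'rV[R]_5) :
  two_step_nilpotent c ->
  (forall x : 'rV[R]_5, projective c x -> affine c x) /\
  (forall x : 'rV[R]_5, affine c x <-> in_center c x).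
Proof.
case=> c_anti _ _ lb_lb; split=> x.
  exact: projective_affine.
by split; [exact: affine_center | exact: center_affine].
Qed.
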